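(* Let $P\subset\mathcal O_W$ be a binomial ideal on $W$ of dimension $n$ with $\theta=\max\mathrm{Eord}(P)>0$. Then at a point $\xi$ with $\mathrm{Eord}_\xi(P)=\theta$ there exists a hypersurface of $E$-maximal contact for $P$ of the form $\{x_i=0\}$ for some $i$.
   Context: $K$ is an algebraically closed field of arbitrary characteristic; $W=\mathrm{Spec}(K[x_1,\dots,x_s,y_1,\dots,y_{n-s}]_y)$ (localization at $y_1\cdots y_{n-s}$), $E\cap W=\{V(x_1),\dots,V(x_s)\}$. For $\xi$ let $\Lambda(\xi)=\{i:\xi\in V(x_i)\}$, $E^0_{\Lambda(\xi)}$ the stratum of points lying on $V(x_i)$ exactly for $i\in\Lambda(\xi)$ (ideal generated by these $x_i$), $\mathrm{Eord}_\xi(J)=\max\{m: J_\xi\subset(I(E^0_{\Lambda(\xi)})_\xi)^m\}$, $\mathrm{ESing}(J,\theta)=\{\xi:\mathrm{Eord}_\xi(J)\ge\theta\}$. A binomial ideal is an ideal generated by elements $x^{\lambda}(1-\mu y^{\delta})$ or $x^{\nu}(y^{\gamma}x^{\alpha}-bx^{\beta})$ with $\lambda,\nu,\alpha,\beta\in\mathbb N^s$, $\gamma,\delta\in\mathbb Z^{n-s}$, $\mu,b\in K$, each $y^\gamma x^\alpha-bx^\beta$ without common factors and $0<|\alpha|\le|\beta|$. $E$-maximal contact: for $\theta=\max\mathrm{Eord}(P)$ attained at $\xi$, a hypersurface $V$ is of $E$-maximal contact for $P$ at $\xi$ if $V$ is regular, $\xi\in V$, $\mathrm{ESing}(P,\theta)\subseteq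 V$, and after blowing up along a combinatorial center $Z=\bigcap_{j\in\mathcal I}\{x_j=0\}\subset V$ one still has $\mathrm{ESing}(P',\theta)\subseteq V'$, where $V'$ is the strict transform and $P'$ the controlled (here weak) transform defined by $P\mathcal O_{W'}=I(Y')^{\theta}P'$ with $Y'$ the exceptional divisor, the $E$-order on $W'$ being taken with respect to the strict transforms of $E$ together with $Y'$; and so on while the maximal $E$-order stays $\theta$. *)

From mathcomp Require Import all_boot all_algebra.
From mathcomp Require Import mpoly.
Set Implicit Arguments. Unset Strict Implicit. Unset Printing Implicit Defensive.
Import GRing.Theory.
Local Open Scope ring_scope.

(* W = Spec K[x_1..x_s, y_1..y_t]_y, n = s + t.
   Since the y_j are units of O_W, every element / ideal of O_W is
   represented (up to a unit y-monomial) by polynomials of K[x,y]. *)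

Section Defs.
Variables (K : closedFieldType) (s t : nat).

Definition XYPoly := {mpoly K[s + t]}.

Definition xv (i : 'I_s) : XYPoly := 'X_(lshift t i).
Definition yv (j : 'I_t) : XYPoly := 'X_(rshift s j).

Definition xmon (a : 'I_s -> nat) : XYPoly := \prod_(i < s) xv i ^+ a i.
Definition ymon (a : 'I_t -> nat) : XYPoly := \prod_(j < t) yv j ^+ a j.

Definition posp (d : 'I_t -> int) : 'I_t -> nat := fun j => absz (Num.max 0%R (d j)).
Definition negp (d : 'I_t -> int) : 'I_t -> nat := fun j => absz (Num.max 0%R (- d j)).

(* The binomial generators, multiplied by the unit y^(negative part) to
   clear denominators:
   x^lam (1 - mu y^del)          ~  x^lam (y^(del-) - mu y^(del+))
   x^nu (y^gam x^al - b x^be)    ~  x^nu (y^(gam+) x^al - b y^(gam-) x^be) *)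
Definition is_binomial_gen (g : XYPoly) : Prop :=
  (exists (lam : 'I_s -> nat) (mu : K) (del : 'I_t -> int),
      g = xmon lam * (ymon (negp del) - mu *: ymon (posp del)))
  \/
  (exists (nu al be : 'I_s -> nat) (gam : 'I_t -> int) (b : K),
      (forall i, al i = 0%N \/ be i = 0%N) (* no common factor *)
      /\ (0 < \sum_(i < s) al i)%N
      /\ (\sum_(i < s) al i <= \sum_(i < s) be i)%N
      /\ g = xmon nu * (ymon (posp gam) * xmon al
                        - b *: (ymon (negp gam) * xmon be))).

(* closed points of W: y-coordinates nonzero *)
Definition XYPoint := 'I_(s + t) -> K.
Definition is_point (a : XYPoint) : Prop := forall j : 'I_t, a (rshift s j) != 0.

Definition in_ideal (G : XYPoly -> Prop) (f : XYPoly) : Prop :=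
  exists cs : seq (XYPoly * XYPoly),
    (forall c, c \in cs -> G c.2) /\ f = \sum_(c <- cs) c.1 * c.2.

(* generators of (I(E^0_Lam))^m = (x_i : i in Lam)^m *)
Definition powgens (Lam : {set 'I_s}) (m : nat) (g : XYPoly) : Prop :=
  exists a : 'I_s -> nat,
    (forall i, i \notin Lam -> a i = 0%N) /\ (\sum_(i < s) a i)%N = m
    /\ g = xmon a.

(* Lambda(xi): indices of the E-components through xi (in a chart, the
   E-components are exactly the coordinate hyperplanes x_i = 0) *)
Definition Lam (a : XYPoint) : {set 'I_s} := [set i | a (lshift t i) == 0].

(* f belongs to (I(E^0_Lam(a))^m)_a in the local ring O_{W,a} *)
Definition loc_mem (a : XYPoint) (m : nat) (f : XYPoly) : Prop :=
  exists h : XYPoly, h.@[a] != 0 /\ in_ideal (powgens (Lam a) m) (h * f).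

Definition EordGe (gs : seq XYPoly) (a : XYPoint) (m : nat) : Prop :=
  forall g, g \in gs -> loc_mem a m g.

(* a chart of an iterated combinatorial blow-up: labels of the coordinate
   hyperplanes x_i = 0 as global components of E (labels 0..s-1: original
   V(x_i); label s+k: exceptional divisor of the (k+1)-th blow-up), and
   generators of the transformed ideal. *)
Record chart := Chart { lab : 'I_s -> nat ; gens : seq XYPoly }.

Definition state := chart -> Prop.

Definition init_state (gs : seq XYPoly) : state :=
  fun c => (forall i, lab c i = nat_of_ord i) /\ gens c = gs.

Definition MaxEordIs (st : state) (th : nat) : Prop :=
  (exists c a, st c /\ is_point a /\ EordGe (gens c) a th)
  /\ (forall c a, st c -> is_point a -> ~ EordGe (gens c) a th.+1).

(* ESing(P, th) contained in V = strict transform of V(x_{i0}) (label i0) *)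
Definition ESingIn (st : state) (th : nat) (i0 : nat) : Prop :=
  forall c a, st c -> is_point a -> EordGe (gens c) a th ->
    exists j, lab c j = i0 /\ a (lshift t j) = 0.

(* the chart meets the center Z = intersection of components labelled in L *)
Definition meets (L : seq nat) (c : chart) : Prop :=
  forall l, l \in L -> exists j, lab c j = l.

(* chart j0 substitution: x_j |-> x_j0 * x_j for j in I, j <> j0 *)
Definition sigma_sub (c : chart) (L : seq nat) (j0 : 'I_s) (p : XYPoly) : XYPoly :=
  p \mPo [tuple (match split k with
                 | inl j => if (lab c j \in L) && (j != j0) then xv j0 * xv j
                            else xv j
                 | inr j => yv j
                 end) | k < s + t].

Definition admissible (st : state) (th : nat) (i0 : nat) (L : seq nat) : Prop :=
  L != [::] /\ (exists c, st c /\ meets L c) /\ i0 \in L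
  /\ (forall c j0 g, st c -> meets L c -> lab c j0 \in L -> g \in gens c ->
        exists q, sigma_sub c L j0 g = xv j0 ^+ th * q).

(* blow-up along L, new exceptional label nl, weak transform with exponent th *)
Definition blowup (th : nat) (nl : nat) (L : seq nat) (st : state) : state :=
  fun c' => exists c, st c /\
   ((~ meets L c /\ (forall i, lab c' i = lab c i) /\ gens c' = gens c)
    \/ (meets L c /\ exists j0, lab c j0 \in L
        /\ (forall i, lab c' i = if i == j0 then nl else lab c i)
        /\ size (gens c') = size (gens c)
        /\ (forall k, (k < size (gens c))%N ->
              xv j0 ^+ th * nth 0 (gens c') k
              = sigma_sub c L j0 (nth 0 (gens c) k)))).

(* after every admissible sequence of blow-ups, performed while the maximal
   E-order stays th, ESing(P', th) stays inside the strict transform V' *)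
Fixpoint MCseq (th i0 k : nat) (st : state) (Ls : seq (seq nat)) : Prop :=
  match Ls with
  | [::] => True
  | L :: Ls' => MaxEordIs st th -> admissible st th i0 L ->
      let st' := blowup th (s + k) L st in
      ESingIn st' th i0 /\ MCseq th i0 k.+1 st' Ls'
  end.

Definition EMaxContact (gs : seq XYPoly) (th : nat) (xi : XYPoint) (i0 : 'I_s) : Prop :=
  xi (lshift t i0) = 0
  /\ ESingIn (init_state gs) th i0
  /\ forall Ls, MCseq th i0 0 (init_state gs) Ls.

End Defs.

From mathcomp Require Import all_boot all_algebra.
From mathcomp Require Import mpoly.
From mathcomp Require Import zify.
Set Implicit Arguments. Unset Strict Implicit. Unset Printing Implicit Defensive.
Import GRing.Theory.
Local Open Scope ring_scope.

(* At the origin of the chart all x_i vanish, so there the E-order of a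
   generator is the least x-degree of its monomials; as the maximal E-order is
   th, some generator g has a monomial mu of x-degree <= th.  At xi every
   monomial of g has at least th x-factors vanishing at xi, so mu has x-degree
   exactly th and all its x-variables vanish at xi; let x_i0 divide mu.
   A chart of a combinatorial blow-up maps mu to a monomial of g(sigma) whose
   quotient by x_j0^th again has x-degree <= th, and either keeps a factor x_j
   labelled i0 or (when j0 has label i0) has x-degree < th.  Hence in every
   transform a point of E-order >= th lies on the strict transform of
   {x_i0 = 0}. *)

Lemma coef_eq0_mulKl (R : idomainType) (p q : {poly R}) N :
  p`_0 != 0 -> (forall d, (d < N)%N -> (p * q)`_d = 0) ->
  forall d, (d < N)%N -> q`_d = 0.
Proof.
move=> p0 pq0; elim/ltn_ind=> d IH dN.
have := pq0 d dN; rewrite coefMr big_ord_recr /= subnn big1.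
  by rewrite add0r => /eqP; rewrite mulf_eq0 (negbTE p0) /= => /eqP.
by move=> i _; rewrite IH ?mulr0 //; exact: ltn_trans (ltn_ord i) dN.
Qed.

Section Weight.
Variables (K : closedFieldType) (s t : nat).
Local Notation n := (s + t)%N.
Implicit Types (a : XYPoint K s t) (p g h : {mpoly K[n]}) (m : 'X_{1..n}).

Lemma msupp_sum_delta p m0 (F : 'X_{1..n} -> K) :
  \sum_(m <- msupp p) p@_m * (m == m0)%:R * F m = p@_m0 * F m0.
Proof.
have [m0p|m0Np] := boolP (m0 \in msupp p).
  rewrite (bigD1_seq m0) //= ?msupp_uniq // eqxx mulr1 big1 ?addr0 //.
  by move=> m /negbTE ->; rewrite mulr0 mul0r.
rewrite memN_msupp_eq0 // mul0r big1_seq // => m /andP [_ mp].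
by case: eqP => [mm0|_]; [move: m0Np; rewrite -mm0 mp | rewrite mulr0 mul0r].
Qed.

Definition vanishes_at a (k : 'I_n) : nat := (k < s)%N && (a k == 0).
Definition weight a m : nat := (\sum_(k < n) vanishes_at a k * m k)%N.

Lemma weightD a m1 m2 : weight a (m1 + m2)%MM = (weight a m1 + weight a m2)%N.
Proof. by rewrite /weight -big_split; apply: eq_bigr => k _; rewrite mnmDE mulnDr. Qed.

Lemma weight_mnm1 a k0 : weight a U_(k0)%MM = vanishes_at a k0.
Proof.
rewrite /weight (bigD1 k0) //= mnm1E eqxx muln1 big1 ?addn0 // => k kk0.
by rewrite mnm1E eq_sym (negbTE kk0) muln0.
Qed.

Lemma weightMn a m c : weight a (m *+ c)%MM = (weight a m * c)%N.
Proof. by rewrite /weight big_distrl; apply: eq_bigr => k _; rewrite mulmnE mulnA. Qed.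

Lemma weight_sum a (I : Type) (r : seq I) (F : I -> 'X_{1..n}) :
  weight a (\sum_(i <- r) F i)%MM = (\sum_(i <- r) weight a (F i))%N.
Proof.
elim: r => [|x r IH]; last by rewrite !big_cons weightD IH.
by rewrite !big_nil /weight big1 // => k _; rewrite mnm0E muln0.
Qed.

Lemma weight_gt0 a m : weight a m != 0%N ->
  exists k : 'I_n, [&& (k < s)%N, a k == 0 & (0 < m k)%N].
Proof.
move=> wm; have [/existsP [k]|noK] := boolP [exists k, vanishes_at a k * m k != 0]%N.
  rewrite /vanishes_at muln_eq0 negb_or => /andP [].
  by case: andP => // [[ks ak]] _ mk; exists k; rewrite ks ak lt0n.
move: wm; rewrite /weight big1 // => k _.
by apply/eqP; apply: contraNT noK => kP; apply/existsP; exists k.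
Qed.

Definition graded_var a (k : 'I_n) : {poly {mpoly K[n]}} := 'X^(vanishes_at a k) * ('X_k)%:P.
Definition weight_graded a (p : {mpoly K[n]}) : {poly {mpoly K[n]}} :=
  mmap (polyC \o @mpolyC n K) (graded_var a) p.

Lemma weight_gradedM a p q :
  weight_graded a (p * q) = weight_graded a p * weight_graded a q.
Proof. exact: (mmap_is_multiplicative _ (polyC \o @mpolyC n K)).1. Qed.

Lemma mmap1_graded_var a m : mmap1 (graded_var a) m = 'X^(weight a m) * ('X_[m])%:P.
Proof.
rewrite /mmap1 /graded_var; under eq_bigr do rewrite exprMn -exprM.
rewrite big_split /= prodrXr mpolyXE_id rmorph_prod.
by congr (_ * _); apply: eq_bigr => i _; rewrite rmorphXn.
Qed.

Lemma weight_graded_coef a p d m :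
  ((weight_graded a p)`_d)@_m = (weight a m == d)%:R * p@_m.
Proof.
rewrite /weight_graded /mmap coef_sum raddf_sum /=.
under eq_bigr => m' _ do rewrite mmap1_graded_var /= mulrCA -rmorphM coefXnM.
transitivity (\sum_(m' <- msupp p) p@_m' * (m' == m)%:R * (weight a m' == d)%:R).
  apply: eq_bigr => m' _; case: ltnP => wd; first by rewrite mcoeff0 (gtn_eqF wd) mulr0.
  rewrite coefC subn_eq0; case: (leqP d (weight a m')) => dw.
    have -> : weight a m' = d by apply/eqP; rewrite eqn_leq dw wd.
    by rewrite eqxx mulr1 mul_mpolyC mcoeffZ mcoeffX.
  by rewrite mcoeff0 (ltn_eqF dw) mulr0.
by rewrite msupp_sum_delta mulrC.
Qed.

Lemma weight_graded_coef0_neq0 a h : h.@[a] != 0 -> (weight_graded a h)`_0 != 0.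
Proof.
apply: contra => /eqP h0_eq0.
have h_eq0 m : weight a m = 0%N -> h@_m = 0.
  by move=> wm; have := weight_graded_coef a h 0 m; rewrite h0_eq0 mcoeff0 wm mul1r.
rewrite mevalE big1_seq // => m /andP [_ mh].
have [/h_eq0 -> | /weight_gt0 [k /and3P [_ /eqP ak mk]]] := eqVneq (weight a m) 0%N.
  by rewrite mul0r.
rewrite (bigD1 k) //= ak expr0n; case: (m k) mk => // ? _.
by rewrite !mul0r mulr0.
Qed.

Definition xexp (b : 'I_s -> nat) : 'X_{1..n} := (\sum_(i < s) U_(lshift t i) *+ b i)%MM.

Lemma xmonE (b : 'I_s -> nat) : xmon K t b = 'X_[xexp b].
Proof. by rewrite /xmon /xv mprodXnE. Qed.

Lemma xexp_lshift b i : xexp b (lshift t i) = b i.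
Proof.
rewrite /xexp mnm_sumE (bigD1 i) //= mulmnE mnm1E eqxx mul1n big1 ?addn0 // => j ji.
by rewrite mulmnE mnm1E (inj_eq (@lshift_inj _ _)) (negbTE ji).
Qed.

Lemma xexp_rshift b j : xexp b (rshift s j) = 0%N.
Proof.
rewrite /xexp mnm_sumE big1 // => i _; rewrite mulmnE mnm1E.
by rewrite (_ : (lshift t i == rshift s j) = false) // eq_lrshift.
Qed.

Lemma in_ideal_powgens_coef_eq0 a th (f : {mpoly K[n]}) :
  in_ideal (powgens (Lam a) th) f -> forall m, (weight a m < th)%N -> f@_m = 0.
Proof.
move=> [cs [csG ->]] m wm; rewrite raddf_sum big1_seq // => c /andP [_ ccs].
have [b [bLam [bsum ->]]] := csG c ccs.
rewrite xmonE; apply/eqP; rewrite mcoeff_eq0; apply/negP.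
rewrite (perm_mem (msuppMX c.1 (xexp b))) => /mapP [m' _ mE].
move: wm; rewrite mE weightD /xexp weight_sum.
rewrite (eq_bigr (fun i => b i)) ?bsum ?ltnNge ?leq_addr // => i _.
rewrite weightMn weight_mnm1 /vanishes_at /=.
have [->|bi] := eqVneq (b i) 0%N; first by rewrite muln0.
have : i \in Lam a by apply: contraNT bi => /bLam ->.
by rewrite inE => ->; rewrite ltn_ord mul1n.
Qed.

Lemma loc_mem_weight a th g m : loc_mem a th g -> m \in msupp g -> (th <= weight a m)%N.
Proof.
move=> [h [ha hg]] mg; rewrite leqNgt; apply/negP => wm.
have low_eq0 d : (d < th)%N -> (weight_graded a h * weight_graded a g)`_d = 0.
  move=> dth; rewrite -weight_gradedM; apply/mpolyP => m'.
  rewrite weight_graded_coef mcoeff0; case: eqP => [wd|]; last by rewrite mul0r.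
  by rewrite (in_ideal_powgens_coef_eq0 hg) ?mulr0 // wd.
have := coef_eq0_mulKl (weight_graded_coef0_neq0 ha) low_eq0 wm.
move=> /(congr1 (mcoeff m)); rewrite weight_graded_coef eqxx mul1r mcoeff0 => /eqP.
by rewrite mcoeff_eq0 mg.
Qed.

Definition xdeg m : nat := (\sum_(i < s) m (lshift t i))%N.

Lemma xdegD m1 m2 : xdeg (m1 + m2)%MM = (xdeg m1 + xdeg m2)%N.
Proof. by rewrite /xdeg -big_split; apply: eq_bigr => i _; rewrite mnmDE. Qed.

Lemma xdeg_mnm1Mn (j0 : 'I_s) c : xdeg (U_(lshift t j0) *+ c)%MM = c.
Proof.
rewrite /xdeg (bigD1 j0) //= mulmnE mnm1E eqxx mul1n big1 ?addn0 // => i ij0.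
by rewrite mulmnE mnm1E (inj_eq (@lshift_inj _ _)) eq_sym (negbTE ij0).
Qed.

Lemma xdeg_weight a m :
  xdeg m = (weight a m + \sum_(i < s) (a (lshift t i) != 0%R :> K) * m (lshift t i))%N.
Proof.
rewrite /weight big_split_ord /= [X in (_ + X + _)%N]big1 ?addn0; last first.
  by move=> j _; rewrite /vanishes_at /= ltnNge leq_addr.
rewrite -big_split /xdeg; apply: eq_bigr => i _; rewrite /vanishes_at /= ltn_ord.
by case: (a (lshift t i) == 0); rewrite /= ?mul0n ?mul1n ?addn0.
Qed.

Lemma weight_le_xdeg a m : (weight a m <= xdeg m)%N.
Proof. by rewrite (xdeg_weight a) leq_addr. Qed.

Lemma weight_eq_xdeg_vanish a m i :
  weight a m = xdeg m -> (0 < m (lshift t i))%N -> a (lshift t i) = 0.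
Proof.
rewrite (xdeg_weight a) => /eqP.
rewrite -[X in X == _]addn0 eqn_add2l eq_sym (bigD1 i) //= addn_eq0 muln_eq0.
move=> /andP [/orP [ai|/eqP ->] _] //.
by move: ai; case: (a (lshift t i) =P 0).
Qed.

Lemma xdeg_gt0 m : (0 < xdeg m)%N -> exists i : 'I_s, (0 < m (lshift t i))%N.
Proof.
move=> deg_gt0; have [/existsP //|noVar] := boolP [exists i : 'I_s, 0 < m (lshift t i)]%N.
suff : xdeg m = 0%N by move=> deg0; rewrite deg0 in deg_gt0.
rewrite /xdeg big1 // => i _; apply/eqP; rewrite -leqn0 leqNgt.
by apply: contraNN noVar => mi; apply/existsP; exists i.
Qed.

Lemma exists_le_sum_eq (v : 'I_s -> nat) N : (N <= \sum_i v i)%N ->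
  exists b : 'I_s -> nat, (forall i, b i <= v i)%N /\ (\sum_i b i)%N = N.
Proof.
elim: N => [|N IH] Nv; first by exists (fun _ => 0%N); split => //; rewrite big1.
have [b [bv bsum]] := IH (ltnW Nv).
have [/existsP [i bi]|noI] := boolP [exists i, b i < v i]%N; last first.
  suff : (\sum_i v i <= \sum_i b i)%N by rewrite bsum; lia.
  apply: leq_sum => i _; rewrite leqNgt; apply: contraNN noI => bi.
  by apply/existsP; exists i.
exists (fun j => b j + (j == i))%N; split.
  by move=> j; have [->|_] := eqVneq j i; rewrite ?addn1 ?addn0.
rewrite big_split /= bsum (bigD1 i) //= eqxx big1 ?addn0 ?addn1 //.
by move=> j /negbTE ->.
Qed.

Lemma in_ideal0 (G : {mpoly K[n]} -> Prop) : in_ideal G 0.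
Proof. by exists [::]; rewrite big_nil. Qed.

Lemma in_idealD (G : {mpoly K[n]} -> Prop) f1 f2 :
  in_ideal G f1 -> in_ideal G f2 -> in_ideal G (f1 + f2).
Proof.
move=> [cs1 [G1 ->]] [cs2 [G2 ->]]; exists (cs1 ++ cs2); split; last by rewrite big_cat.
by move=> c; rewrite mem_cat => /orP [/G1|/G2].
Qed.

Lemma in_ideal_mul_gen (G : {mpoly K[n]} -> Prop) q g : G g -> in_ideal G (q * g).
Proof.
move=> Gg; exists [:: (q, g)]; rewrite big_seq1; split => // c.
by rewrite inE => /eqP ->.
Qed.

Lemma loc_mem_xdeg a th g : (forall i, a (lshift t i) = 0) ->
  (forall m, m \in msupp g -> (th <= xdeg m)%N) -> loc_mem a th g.
Proof.
move=> a0 gdeg; exists 1; split; first by rewrite meval1 oner_neq0.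
rewrite mul1r [g]mpolyE.
elim: (msupp g) (fun m (mg : m \in msupp g) => gdeg m mg) => [|m r IH] rdeg.
  by rewrite big_nil; exact: in_ideal0.
rewrite big_cons; apply: in_idealD; last first.
  by apply: IH => m' m'r; apply: rdeg; rewrite inE m'r orbT.
have [b [bm bsum]] := exists_le_sum_eq (rdeg m (mem_head _ _)).
have le_bm : (xexp b <= m)%MM.
  apply/mnm_lepP => l; rewrite -(splitK l).
  by case: (split l) => [i|j] /=; rewrite ?xexp_lshift ?xexp_rshift.
rewrite -(submK le_bm) mpolyXD scalerAl -xmonE; apply: in_ideal_mul_gen.
by exists b; split => // i; rewrite inE a0 eqxx.
Qed.

End Weight.

Arguments xdeg {s} t m.

Section ChartSubstitution.
Variables (K : closedFieldType) (s t : nat).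
Local Notation n := (s + t)%N.
Variables (c : chart K s t) (L : seq nat) (j0 : 'I_s).
Implicit Types (p : {mpoly K[n]}) (m : 'X_{1..n}).

Definition blown_up (k : 'I_n) : bool :=
  if split k is inl j then (lab c j \in L) && (j != j0) else false.

Definition sub_mnm1 (k : 'I_n) : 'X_{1..n} :=
  (U_(k) + (if blown_up k then U_(lshift t j0) else 0))%MM.

(* The x_j0-degree gained by a monomial under [sigma_sub c L j0]. *)
Definition center_deg m : nat := (\sum_(i < s | (lab c i \in L) && (i != j0)) m (lshift t i))%N.

Definition sub_mnm m : 'X_{1..n} := (m + U_(lshift t j0) *+ center_deg m)%MM.

Lemma blown_up_lshift i : blown_up (lshift t i) = (lab c i \in L) && (i != j0).
Proof. by rewrite /blown_up (_ : split (lshift t i) = inl i) //; exact: (unsplitK (inl i)). Qed.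

Lemma blown_up_rshift j : blown_up (rshift s j) = false.
Proof. by rewrite /blown_up (_ : split (rshift s j) = inr j) //; exact: (unsplitK (inr j)). Qed.

Lemma sub_mnm1E k l : sub_mnm1 k l = ((k == l) + blown_up k * (lshift t j0 == l))%N.
Proof. by rewrite /sub_mnm1 mnmDE mnm1E; case: blown_up; rewrite /= ?mnm1E ?mnm0E ?mul1n. Qed.

Lemma sigma_sub_varE (k : 'I_n) :
  (match split k with
   | inl j => if (lab c j \in L) && (j != j0) then xv K t j0 * xv K t j else xv K t j
   | inr j => yv K s j end) = 'X_[sub_mnm1 k].
Proof.
rewrite /sub_mnm1 /blown_up; case: splitP => [j kj|j kj].
  have -> : k = lshift t j by apply: val_inj.
  by case: ifP => _; rewrite ?addm0 // /xv -mpolyXD addmC.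
have -> : k = rshift s j by apply: val_inj.
by rewrite addm0.
Qed.

Lemma sum_sub_mnm1 m : (\sum_(k < n) sub_mnm1 k *+ m k)%MM = sub_mnm m.
Proof.
apply/mnmP => l; rewrite mnm_sumE /sub_mnm mnmDE mulmnE mnm1E.
under eq_bigr => k _ do rewrite mulmnE sub_mnm1E mulnDl.
rewrite big_split /= (bigD1 l) //= eqxx mul1n big1 ?addn0; last first.
  by move=> k /negbTE ->; rewrite mul0n.
congr (_ + _)%N; rewrite big_split_ord /= [X in (_ + X)%N]big1 ?addn0; last first.
  by move=> j _; rewrite blown_up_rshift.
rewrite /center_deg big_distrr /= [RHS]big_mkcond /=; apply: eq_bigr => i _.
by rewrite blown_up_lshift; case: ifP; rewrite ?mul0n ?mul1n.
Qed.

Lemma sigma_subE p : sigma_sub c L j0 p = \sum_(m <- msupp p) p@_m *: 'X_[sub_mnm m].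
Proof.
rewrite /sigma_sub comp_mpolyE; apply: eq_bigr => m _; congr (_ *: _).
under eq_bigr => k _ do rewrite tnth_mktuple sigma_sub_varE.
by rewrite mprodXnE sum_sub_mnm1.
Qed.

Lemma sub_mnmE m l : sub_mnm m l = (m l + (lshift t j0 == l) * center_deg m)%N.
Proof. by rewrite /sub_mnm mnmDE mulmnE mnm1E mulnC. Qed.

Lemma sub_mnm_inj : injective sub_mnm.
Proof.
move=> m1 m2 m12.
have off_j0 l : l != lshift t j0 -> m1 l = m2 l.
  move=> lj0; have := congr1 (fun m : 'X_{1..n} => m l) m12.
  by rewrite !sub_mnmE eq_sym (negbTE lj0) !mul0n !addn0.
have deg12 : center_deg m1 = center_deg m2.
  by apply: eq_bigr => i /andP [_ ij0]; apply: off_j0; rewrite (inj_eq (@lshift_inj _ _)).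
apply/mnmP => l; have [->|/off_j0 //] := eqVneq l (lshift t j0).
have := congr1 (fun m : 'X_{1..n} => m (lshift t j0)) m12.
rewrite !sub_mnmE eqxx deg12 mul1n; lia.
Qed.

Lemma sigma_sub_coef p m : (sigma_sub c L j0 p)@_(sub_mnm m) = p@_m.
Proof.
rewrite sigma_subE raddf_sum /=.
under eq_bigr do rewrite mcoeffZ mcoeffX (inj_eq sub_mnm_inj) -[_ * _]mulr1.
by rewrite msupp_sum_delta mulr1.
Qed.

Lemma center_deg_le m : (center_deg m + m (lshift t j0) <= xdeg t m)%N.
Proof.
rewrite /xdeg (bigD1 j0) //= addnC leq_add2l /center_deg.
rewrite [X in (_ <= X)%N]big_mkcond [X in (X <= _)%N]big_mkcond.
by apply: leq_sum => i _; case: (lab c i \in L); case: (i != j0).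
Qed.

End ChartSubstitution.

Section ContactWitness.
Variables (K : closedFieldType) (s t : nat) (th : nat) (i0 : nat).

Definition contact_witness (idx : nat) (st : state K s t) : Prop :=
  forall c, st c -> (idx < size (gens c))%N /\
   exists m, m \in msupp (nth 0 (gens c) idx) /\ (xdeg t m <= th)%N /\
     ((exists j, lab c j = i0 /\ (0 < m (lshift t j))%N) \/ (xdeg t m < th)%N).

Lemma contact_witness_ESingIn idx st : contact_witness idx st -> ESingIn st th i0.
Proof.
move=> wit c a stc _ ordth; have [idx_lt [m [mg [m_le m_lab]]]] := wit c stc.
have th_le := loc_mem_weight (ordth _ (mem_nth 0 idx_lt)) mg.
have w_le := weight_le_xdeg a m.
case: m_lab => [[j [ji0 mj]]|]; last by lia.
by exists j; split => //; apply: (weight_eq_xdeg_vanish (m:=m)) => //; lia.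
Qed.

Lemma contact_witness_blowup idx st nl L :
  contact_witness idx st -> contact_witness idx (blowup th nl L st).
Proof.
move=> wit c' [c [stc [[_ [lab' ->]] | [_ [j0 [j0L [lab' [size' gens']]]]]]]];
  have [idx_lt [m [mg [m_le m_lab]]]] := wit c stc.
  split => //; exists m; do 2 split => //.
  by case: m_lab => [[j [ji0 mj]]|]; [left; exists j; rewrite lab' | right].
split; first by rewrite size'.
have : sub_mnm c L j0 m \in msupp (nth 0 (gens c') idx * 'X_[U_(lshift t j0) *+ th]).
  rewrite mcoeff_msupp -mpolyXn mulrC.
  by rewrite [_ ^+ th * _](gens' idx idx_lt) sigma_sub_coef -mcoeff_msupp.
rewrite (perm_mem (msuppMX _ _)) => /mapP [m' m'g subE].
have deg_sub : xdeg t (sub_mnm c L j0 m) = (xdeg t m + center_deg c L j0 m)%N.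
  by rewrite /sub_mnm xdegD xdeg_mnm1Mn.
have deg_m' : xdeg t (sub_mnm c L j0 m) = (th + xdeg t m')%N.
  by rewrite subE xdegD xdeg_mnm1Mn.
have center_le := center_deg_le c L j0 m.
have m'E j : j != j0 -> m' (lshift t j) = m (lshift t j).
  move=> jj0; have := congr1 (fun m : 'X_{1..s + t} => m (lshift t j)) subE.
  rewrite sub_mnmE mnmDE mulmnE mnm1E (inj_eq (@lshift_inj _ _)) eq_sym (negbTE jj0).
  by rewrite /= !mul0n add0n addn0.
exists m'; split => //; split; first by lia.
case: m_lab => [[j [ji0 mj]]|]; last by right; lia.
have [jj0|jj0] := eqVneq j j0; first by right; subst j; lia.
by left; exists j; rewrite lab' (negbTE jj0) m'E.
Qed.

Lemma contact_witness_MCseq idx Ls : forall st k,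
  contact_witness idx st -> MCseq th i0 k st Ls.
Proof.
elim: Ls => [//|L Ls IH] st k wit /= _ _.
have wit' := contact_witness_blowup (nl := s + k) (L := L) wit.
by split; [exact: contact_witness_ESingIn wit' | exact: IH].
Qed.

End ContactWitness.

Lemma low_xdeg_monomial (K : closedFieldType) (s t : nat) (P : seq (XYPoly K s t)) th :
  (forall c a, init_state P c -> is_point a -> ~ EordGe (gens c) a th.+1) ->
  exists2 g, g \in P & exists2 m, m \in msupp g & (xdeg t m <= th)%N.
Proof.
move=> max_th; pose origin : XYPoint K s t := fun k => if (k < s)%N then 0 else 1.
have origin_pt : is_point origin.
  by move=> j; rewrite /origin /= ltnNge leq_addr /= oner_neq0.
have [/hasP [g gP /hasP [m mg m_le]] | noLow] :=
  boolP (has (fun g => has (fun m => xdeg t m <= th)%N (msupp g)) P).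
  by exists g => //; exists m.
case: (max_th (Chart (fun i => nat_of_ord i) P) origin _ origin_pt) => // g gP /=.
apply: loc_mem_xdeg => [i|m mg]; first by rewrite /origin /= ltn_ord.
rewrite ltnNge; apply: contra noLow => m_le.
by apply/hasP; exists g => //; apply/hasP; exists m.
Qed.

Unset Implicit Arguments.

Theorem mainTheorem14 (K : closedFieldType) (s t : nat) (P : seq (XYPoly K s t))
  (th : nat) (xi : XYPoint K s t) :
  (forall g, g \in P -> is_binomial_gen g) ->
  (0 < th)%N ->
  MaxEordIs (init_state P) th ->
  is_point xi -> EordGe P xi th -> ~ EordGe P xi th.+1 ->
  exists i0 : 'I_s, EMaxContact P th xi i0.
Proof.
move=> _ th_gt0 [_ max_th] _ ord_xi _.
have [g gP [m mg m_le]] := low_xdeg_monomial max_th.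
have w_ge := loc_mem_weight (ord_xi g gP) mg.
have w_le := weight_le_xdeg xi m.
have [i0 mi0] : exists i0 : 'I_s, (0 < m (lshift t i0))%N by apply: xdeg_gt0; lia.
have wit : contact_witness th i0 (index g P) (init_state P).
  move=> c [labE ->]; split; first by rewrite index_mem.
  by exists m; rewrite nth_index //; split => //; split => //; left; exists i0.
exists i0; split; first by apply: (weight_eq_xdeg_vanish (m:=m)) => //; lia.
by split; [exact: contact_witness_ESingIn wit | move=> Ls; exact: contact_witness_MCseq wit].
Qed.
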